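(* Let $G$ be a graph with chromatic number $\chi(G)$, and suppose $G$ has a proper coloring with $\chi(G)$ color classes $V_1,\ldots,V_{\chi(G)}$, where $V_i=\{v_{i,1},v_{i,2},\ldots,v_{i,n(i)}\}$, such that for each vertex $v_{i,j}$ there is a subset $X_{i,j}\subseteq V(G)\setminus V_i$ with $N_G(v_{i,j})\subseteq X_{i,j}$, satisfying: (i) for each $i$ there is $k(i)\in\{1,\ldots,n(i)\}$ with $X_{i,1}\supseteq X_{i,2}\supseteq\cdots\supseteq X_{i,k(i)}$ and $X_{i,k(i)+1}\subseteq X_{i,k(i)+2}\subseteq\cdots\subseteq X_{i,n(i)}$ (when $k(i)=n(i)$ only the first chain is required); (ii) for any two distinct nonadjacent vertices $v_{i,s}$ and $v_{j,t}$ of $G$, either $v_{i,s}\notin X_{j,t}$ or $v_{j,t}\notin X_{i,s}$. Then $\operatorname{box}(G)\le\chi(G)$.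
   Context: All graphs are finite, simple and undirected. $N_G(v)$ is the set of neighbors of $v$ in $G$. A box in $\mathbb{R}^k$ is a Cartesian product of $k$ closed intervals of the real line. The boxicity $\operatorname{box}(G)$ of a graph $G$ is the minimum nonnegative integer $k$ such that $G$ is isomorphic to the intersection graph of a family of boxes in $\mathbb{R}^k$. $\chi(G)$ is the chromatic number of $G$; a proper coloring with $k$ colors partitions $V(G)$ into $k$ independent sets called color classes. *)

From mathcomp Require Import all_boot.
From Stdlib Require Import Reals.
Set Implicit Arguments. Unset Strict Implicit. Unset Printing Implicit Defensive.

Definition simple_graph (T : finType) (e : rel T) : Prop :=
  symmetric e /\ irreflexive e.

Definition proper_coloring (T : finType) (e : rel T) (k : nat) (c : T -> 'I_k) : Prop :=
  forall x y, e x y -> c x != c y.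

Definition colorable (T : finType) (e : rel T) (k : nat) : Prop :=
  exists c : T -> 'I_k, proper_coloring e c.

Definition is_chromatic_number (T : finType) (e : rel T) (k : nat) : Prop :=
  colorable e k /\ (forall k', colorable e k' -> (k <= k')%N).

(* A box in R^k: lo i <= hi i for each coordinate i; the box of v is
   prod_i [lo v i, hi v i].  Two boxes intersect iff in every coordinate the
   closed intervals intersect. *)
Definition boxes_intersect (k : nat) (lo1 hi1 lo2 hi2 : 'I_k -> R) : Prop :=
  forall i, Rle (lo1 i) (hi2 i) /\ Rle (lo2 i) (hi1 i).

Definition box_representation (T : finType) (e : rel T) (k : nat) : Prop :=
  exists lo hi : T -> 'I_k -> R,
    (forall v i, Rle (lo v i) (hi v i)) /\
    (forall x y, x <> y -> (e x y <-> boxes_intersect (lo x) (hi x) (lo y) (hi y))).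

Definition boxicity_le (T : finType) (e : rel T) (k : nat) : Prop :=
  exists k', (k' <= k)%N /\ box_representation e k'.

From mathcomp Require Import all_boot.
From Stdlib Require Import Reals Lra.

Set Implicit Arguments.
Unset Strict Implicit.
Unset Printing Implicit Defensive.

(* In coordinate [i] the colour class [V_i] becomes a set of distinct points
   and every other vertex [u] an interval around [-1/2], chosen so that the
   point of [v] lies in the interval of [u] iff [u \in X v].  This is possible
   by (i): the [v] with [u \in X v] form a prefix of the decreasing chain and
   a suffix of the increasing one, so placing the decreasing chain at
   [0, 1, ..., k(i)-1] and the increasing chain at [k(i)-n(i), ..., -1] makes them a
   window around [-1/2].  Two boxes of different colours then meet iff each
   vertex lies in the other's [X], which by [N(v) \subset X v] and (ii) means
   adjacency; boxes of equal colour are separated by their distinct points. *)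

Section FindThreshold.
Variables (T : eqType) (s : seq T).
Hypothesis s_uniq : uniq s.

Lemma upclosed_find_leq (a : pred T) v :
    {in s &, forall x y, index x s <= index y s -> a x -> a y} ->
  v \in s -> a v = (find a s <= index v s).
Proof.
move=> a_up sv; apply/idP/idP => [av | fv].
  by rewrite leqNgt; apply/negP => /(before_find v); rewrite nth_index // av.
have has_a : has a s by rewrite has_find (leq_ltn_trans fv) ?index_mem.
have ws : nth v s (find a s) \in s by rewrite mem_nth // -has_find.
apply: a_up ws sv _ (nth_find v has_a).
by rewrite index_uniq // -has_find.
Qed.

Lemma downclosed_find_gtn (a : pred T) v :
    {in s &, forall x y, index x s <= index y s -> a y -> a x} ->
  v \in s -> a v = (index v s < find (predC a) s).
Proof.
move=> a_down sv; have Ca_up : {in s &, forall x y,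
    index x s <= index y s -> predC a x -> predC a y}.
  by move=> x y xs ys le_xy; apply: contra; apply: a_down.
by rewrite ltnNge -(upclosed_find_leq Ca_up sv) negbK.
Qed.

End FindThreshold.

Lemma INR_le_sub_half m n : (INR m <= INR n - / 2)%R <-> (m < n)%N.
Proof.
split=> [le_mn | /leP/le_INR]; last by rewrite S_INR; lra.
by rewrite ltnNge; apply/negP => /leP/le_INR; lra.
Qed.

Lemma INR_sub_half_le m n : (INR m - / 2 <= INR n)%R <-> (m <= n)%N.
Proof.
split=> [le_mn | /leP/le_INR]; last lra.
by rewrite leqNgt; apply/negP => /leP/le_INR; rewrite S_INR; lra.
Qed.

Section ChainCoordinate.
Variables (T : finType) (s : seq T) (kk : nat) (X : T -> {set T}).
Hypothesis s_uniq : uniq s.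
Hypothesis X_decr : forall x y, x \in s -> y \in s ->
  index x s <= index y s -> index y s < kk -> X y \subset X x.
Hypothesis X_incr : forall x y, x \in s -> y \in s ->
  kk <= index x s -> index x s <= index y s -> X x \subset X y.

Definition in_decr_part (u : T) : pred T :=
  [pred w | (index w s < kk) && (u \in X w)].
Definition in_incr_part (u : T) : pred T :=
  [pred w | (kk <= index w s) && (u \in X w)].

Definition chain_point (v : T) : R :=
  if index v s < kk then INR (index v s)
  else (INR (index v s) - INR (size s))%R.
Definition chain_low (u : T) : R :=
  (INR (find (in_incr_part u) s) - INR (size s) - / 2)%R.
Definition chain_high (u : T) : R :=
  (INR (find (predC (in_decr_part u)) s) - / 2)%R.

Lemma INR_index_lt x : x \in s -> (INR (index x s) + 1 <= INR (size s))%R.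
Proof. by rewrite -index_mem => /leP/le_INR; rewrite S_INR. Qed.

Lemma chain_low_le u : (chain_low u <= - / 2)%R.
Proof. by have /leP/le_INR := find_size (in_incr_part u) s; rewrite /chain_low; lra. Qed.

Lemma chain_high_ge u : (- / 2 <= chain_high u)%R.
Proof. by have := pos_INR (find (predC (in_decr_part u)) s); rewrite /chain_high; lra. Qed.

Lemma chain_point_inj : {in s &, injective chain_point}.
Proof.
move=> x y xs ys; rewrite /chain_point => E; apply: (index_inj x xs ys); apply: INR_eq.
have := INR_index_lt xs; have := INR_index_lt ys.
have := pos_INR (index x s); have := pos_INR (index y s).
by case: ifP E => _; case: ifP => _; lra.
Qed.

Lemma mem_chain_interval u v : v \in s ->
  (chain_low u <= chain_point v <= chain_high u)%R <-> u \in X v.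
Proof.
move=> vs; have := INR_index_lt vs; have := chain_low_le u.
have := chain_high_ge u; have := pos_INR (index v s).
rewrite /chain_point; case: (ltnP (index v s) kk) => [v_decr | v_incr].
- have decr_down : {in s &, forall x y, index x s <= index y s ->
      in_decr_part u y -> in_decr_part u x}.
    rewrite /in_decr_part => x y xs ys le_xy /= /andP[y_lt u_Xy].
    rewrite (leq_ltn_trans le_xy y_lt).
    exact: subsetP (X_decr xs ys le_xy y_lt) u u_Xy.
  have -> : u \in X v = (index v s < find (predC (in_decr_part u)) s).
    by rewrite -(downclosed_find_gtn s_uniq decr_down vs) /in_decr_part /= v_decr.
  rewrite -INR_le_sub_half /chain_high => ? ? ? ?.
  by split=> [[? ?] | ?]; try split; lra.
- have incr_up : {in s &, forall x y, index x s <= index y s ->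
      in_incr_part u x -> in_incr_part u y}.
    rewrite /in_incr_part => x y xs ys le_xy /= /andP[x_ge u_Xx].
    rewrite (leq_trans x_ge le_xy).
    exact: subsetP (X_incr xs ys x_ge le_xy) u u_Xx.
  have -> : u \in X v = (find (in_incr_part u) s <= index v s).
    by rewrite -(upclosed_find_leq s_uniq incr_up vs) /in_incr_part /= v_incr.
  rewrite -INR_sub_half_le /chain_low => ? ? ? ?.
  by split=> [[? ?] | ?]; try split; lra.
Qed.

End ChainCoordinate.

Section ColourClassBoxes.
Variables (T : finType) (k : nat) (c : T -> 'I_k) (X : T -> {set T}).
Variables (point low high : 'I_k -> T -> R).
Hypothesis low_le_high : forall i u w, (low i u <= high i w)%R.
Hypothesis point_inj : forall i, {in [pred v | c v == i] &, injective (point i)}.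
Hypothesis mem_interval : forall i u v, c v = i -> c u != i ->
  (low i u <= point i v <= high i u)%R <-> u \in X v.

Definition box_lo (v : T) (i : 'I_k) : R := if c v == i then point i v else low i v.
Definition box_hi (v : T) (i : 'I_k) : R := if c v == i then point i v else high i v.

Lemma box_lo_le_hi v i : (box_lo v i <= box_hi v i)%R.
Proof. by rewrite /box_lo /box_hi; case: ifP => _; [apply: Rle_refl | apply: low_le_high]. Qed.

Lemma box_coord_point_interval i x y : c x = i -> c y != i ->
  (box_lo x i <= box_hi y i /\ box_lo y i <= box_hi x i)%R <-> y \in X x.
Proof.
move=> cx cy; rewrite /box_lo /box_hi cx eqxx (negbTE cy) -(mem_interval cx cy).
exact: and_comm.
Qed.

Lemma boxes_intersectE x y : x != y ->
  boxes_intersect (box_lo x) (box_hi x) (box_lo y) (box_hi y) <->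
  [&& c x != c y, y \in X x & x \in X y].
Proof.
move=> neq_xy; split=> [meet | /and3P[cxy y_Xx x_Xy] i].
- have [cxy | cxy] := eqVneq (c x) (c y).
    have := meet (c x); rewrite /box_lo /box_hi eqxx cxy eqxx => -[? ?].
    have xy_eq : point (c y) x = point (c y) y by apply: Rle_antisym.
    by move: neq_xy; rewrite (point_inj _ _ xy_eq) ?inE ?cxy ?eqxx.
  have cyx : c y != c x by rewrite eq_sym.
  rewrite /= (box_coord_point_interval erefl cyx).1 ?meet //=.
  by apply: (box_coord_point_interval erefl cxy).1; have [? ?] := meet (c y).
- have [cx | cxi] := eqVneq (c x) i.
    by apply/(box_coord_point_interval cx); rewrite // -cx eq_sym.
  have [cy | cyi] := eqVneq (c y) i.
    by have [? ?] := (box_coord_point_interval cy cxi).2 x_Xy; split.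
  by rewrite /box_lo /box_hi (negbTE cxi) (negbTE cyi); split; apply: low_le_high.
Qed.

End ColourClassBoxes.

Lemma edge_iff_mutual_mem (T : finType) (e : rel T) k (c : T -> 'I_k)
    (X : T -> {set T}) :
  symmetric e -> proper_coloring e c -> (forall x y, e x y -> y \in X x) ->
  (forall x y, x != y -> ~~ e x y -> (x \notin X y) || (y \notin X x)) ->
  forall x y, x != y -> e x y = [&& c x != c y, y \in X x & x \in X y].
Proof.
move=> e_sym c_proper e_X mutual x y neq_xy; apply/idP/idP.
  by move=> exy; rewrite c_proper // e_X // e_X // e_sym.
by case/and3P=> _ y_Xx x_Xy; apply/negPn/negP => /(mutual x y neq_xy); rewrite x_Xy y_Xx.
Qed.

Theorem theorem3p1 (T : finType) (e : rel T) (chi : nat)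
  (c : T -> 'I_chi)          (* colour classes V_i = c^-1(i) *)
  (s : 'I_chi -> seq T)      (* s i = [:: v_{i,1}; ...; v_{i,n(i)}] *)
  (X : T -> {set T}) :       (* X x = X_{i,j} for x = v_{i,j} *)
  simple_graph e ->
  is_chromatic_number e chi ->
  proper_coloring e c ->
  (forall i, uniq (s i)) ->
  (forall i x, (x \in s i) = (c x == i)) ->
  (forall x y, y \in X x -> c y != c x) ->
  (forall x y, e x y -> y \in X x) ->
  (* (i), with 0-based positions: k(i) = kk, 1 <= kk <= n(i) *)
  (forall i, exists kk, (0 < kk <= size (s i))%N /\
     (forall x y, x \in s i -> y \in s i ->
        (index x (s i) <= index y (s i))%N -> (index y (s i) < kk)%N ->
        X y \subset X x) /\
     (forall x y, x \in s i -> y \in s i ->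
        (kk <= index x (s i))%N -> (index x (s i) <= index y (s i))%N ->
        X x \subset X y)) ->
  (* (ii) *)
  (forall x y, x != y -> ~~ e x y -> (x \notin X y) || (y \notin X x)) ->
  boxicity_le e chi.
Proof.
move=> [e_sym _] _ c_proper s_uniq mem_s _ e_X /fin_all_exists[K K_chains] mutual.
pose point i := chain_point (s i) (K i).
pose low i := chain_low (s i) (K i) X.
pose high i := chain_high (s i) (K i) X.
have low_le_high i u w : (low i u <= high i w)%R.
  have := chain_low_le (s i) (K i) X u; have := chain_high_ge (s i) (K i) X w.
  by rewrite /low /high; lra.
have point_inj i : {in [pred v | c v == i] &, injective (point i)}.
  by move=> x y; rewrite !inE -!mem_s; apply: chain_point_inj.
have mem_interval i u v : c v = i -> c u != i ->
    (low i u <= point i v <= high i u)%R <-> u \in X v.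
  have [_ [X_decr X_incr]] := K_chains i.
  by move=> cv _; apply: mem_chain_interval; rewrite ?mem_s ?cv.
exists chi; split=> //; exists (box_lo c point low), (box_hi c point high).
split=> [| x y /eqP neq_xy]; first exact: box_lo_le_hi.
rewrite (boxes_intersectE low_le_high point_inj mem_interval neq_xy).
by rewrite (edge_iff_mutual_mem e_sym c_proper e_X mutual neq_xy).
Qed.
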